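(* As $\epsilon\to 0^+$, $u^\epsilon(r)\to u(r)$ uniformly for $0\le r\le 1$.
   Context: Let $\mathcal{B}(0,1)$ be the unit ball in $\mathbb{R}^n$ and let $V:[0,1)\to[0,\infty)$ be nonnegative and Lipschitz continuous, viewed as a radially symmetric function $V(x)=V(|x|)$ on $\mathcal{B}(0,1)$. For $\epsilon>0$, $u^\epsilon$ denotes the radially symmetric solution of $|Du^\epsilon|-V=\epsilon\Delta u^\epsilon$ in $\mathcal{B}(0,1)$, $u^\epsilon=0$ on $\partial\mathcal{B}(0,1)$, given explicitly for $|x|=r\in[0,1]$ by $u^\epsilon(r)=\int_r^1\left(\frac{1}{\epsilon}\int_0^s (t/s)^{n-1}e^{(t-s)/\epsilon}V(t)\,dt\right)ds$. Also $u(r)=\int_r^1 V(s)\,ds$ for $|x|=r\in[0,1]$, which is the maximal radially symmetric viscosity solution of $|Du|=V$ in $\mathcal{B}(0,1)$, $u=0$ on $\partial\mathcal{B}(0,1)$. *)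

From Stdlib Require Import Reals Lra.
From Coquelicot Require Import Coquelicot.
Open Scope R_scope.

(* Radial profile of the viscous solution u^eps in dimension n:
   u^eps(r) = int_r^1 ( (1/eps) int_0^s (t/s)^(n-1) e^((t-s)/eps) V(t) dt ) ds *)
Definition u_eps (n : nat) (V : R -> R) (eps r : R) : R :=
  RInt (fun s => / eps *
          RInt (fun t => (t / s) ^ (n - 1) * exp ((t - s) / eps) * V t) 0 s)
       r 1.

(* Radial profile of the maximal viscosity solution: u(r) = int_r^1 V(s) ds *)
Definition u_lim (V : R -> R) (r : R) : R := RInt V r 1.

From Stdlib Require Import Reals Lra.
From Coquelicot Require Import Coquelicot.
Open Scope R_scope.

(* Write m = n - 1 and u^eps(r) = int_r^1 w(s) ds, where
   w(s) = (1/eps) int_0^s (t/s)^m e^((t-s)/eps) V(t) dt.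
   Since (1/eps) int_0^s e^((t-s)/eps) dt = 1 - e^(-s/eps), w(s) is a weighted average of V
   concentrated on an eps-neighbourhood of s, with a mass defect e^(-s/eps), and the factor
   (t/s)^m differs from 1 by at most m (s - t)/s. For s > 0 this gives
   |w(s) - V(s)| <= eps (L + M (m + 1)/s), where L and M are a Lipschitz constant and a
   bound of V, while |w| <= M everywhere. Splitting int_r^1 at a small a yields
   |u^eps(r) - u(r)| <= 2 M a + eps (L + M (m + 1)/a), uniformly in r.
   To make all integrands continuous, V is first extended from [0, 1) to a bounded
   Lipschitz function on R, which does not change u^eps or u. *)

(* Coquelicot states these for arbitrary normed modules; for real-valued functions the
   conclusions only match up to conversion, so they cannot be used by rewrite or apply. *)

Lemma ex_RInt_continuous_R (f : R -> R) (a b : R) :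
  (forall z, Rmin a b <= z <= Rmax a b -> continuous f z) -> ex_RInt f a b.
Proof. exact (ex_RInt_continuous f a b). Qed.

Lemma ex_derive_continuous_R (f : R -> R) (x : R) : ex_derive f x -> continuous f x.
Proof. exact (@ex_derive_continuous R_AbsRing R_NormedModule f x). Qed.

Lemma continuous_mult_R (f g : R -> R) (x : R) :
  continuous f x -> continuous g x -> continuous (fun y => f y * g y) x.
Proof. exact (continuous_mult f g x). Qed.

Lemma RInt_ext_R (f g : R -> R) (a b : R) :
  (forall x, Rmin a b < x < Rmax a b -> f x = g x) -> RInt f a b = RInt g a b.
Proof. exact (RInt_ext f g a b). Qed.

Lemma RInt_scal_R (f : R -> R) (a b k : R) :
  ex_RInt f a b -> RInt (fun x => k * f x) a b = k * RInt f a b.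
Proof. exact (RInt_scal f a b k). Qed.

Lemma RInt_minus_R (f g : R -> R) (a b : R) :
  ex_RInt f a b -> ex_RInt g a b ->
  RInt (fun x => f x - g x) a b = RInt f a b - RInt g a b.
Proof. exact (RInt_minus f g a b). Qed.

Lemma RInt_Chasles_R (f : R -> R) (a b c : R) :
  ex_RInt f a b -> ex_RInt f b c -> RInt f a b + RInt f b c = RInt f a c.
Proof. exact (RInt_Chasles f a b c). Qed.

Lemma ex_RInt_ex_derive (f : R -> R) (a b : R) : (forall t, ex_derive f t) -> ex_RInt f a b.
Proof.
  intros Hf. apply ex_RInt_continuous_R. intros t _. apply ex_derive_continuous_R, Hf.
Qed.

Lemma continuous_of_lipschitz_at (f : R -> R) (x0 C : R) :
  (forall x, Rabs (f x - f x0) <= C * Rabs (x - x0)) -> continuous f x0.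
Proof.
  intros Hf. apply continuity_pt_filterlim. intros e He.
  pose proof (Rabs_pos C) as HC.
  exists (e / (Rabs C + 1)). split; [apply Rdiv_lt_0_compat; lra |].
  intros x [_ Hx]. simpl in *. unfold R_dist in *.
  assert (Hd : e / (Rabs C + 1) * (Rabs C + 1) = e) by (field; lra).
  pose proof (Rabs_pos (x - x0)). pose proof (Hf x). pose proof (Rle_abs C).
  nra.
Qed.

Lemma abs_RInt_le_RInt (f g : R -> R) (a b : R) :
  a <= b -> ex_RInt f a b -> ex_RInt g a b ->
  (forall t, a < t < b -> Rabs (f t) <= g t) -> Rabs (RInt f a b) <= RInt g a b.
Proof.
  intros Hab Hf Hg Hfg.
  assert (Hopp : RInt (fun t => - g t) a b = - RInt g a b) by exact (RInt_opp g a b Hg).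
  assert (Hle : RInt (fun t => - g t) a b <= RInt f a b).
  { apply RInt_le; [exact Hab | exact (ex_RInt_opp g a b Hg) | exact Hf |].
    intros t Ht. specialize (Hfg t Ht). pose proof (Rle_abs (- f t)).
    rewrite Rabs_Ropp in *. lra. }
  assert (Hge : RInt f a b <= RInt g a b).
  { apply RInt_le; [exact Hab | exact Hf | exact Hg |].
    intros t Ht. specialize (Hfg t Ht). pose proof (Rle_abs (f t)). lra. }
  apply Rabs_le. lra.
Qed.

Lemma abs_RInt_split_le (f : R -> R) (A B c a d r : R) :
  c <= a <= d -> c <= r <= d -> 0 <= A -> 0 <= B ->
  (forall x y, c <= x <= d -> c <= y <= d -> ex_RInt f x y) ->
  (forall t, c <= t <= a -> Rabs (f t) <= A) ->
  (forall t, a <= t <= d -> Rabs (f t) <= B) ->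
  Rabs (RInt f r d) <= A * (a - c) + B * (d - a).
Proof.
  intros Ha Hr HA HB Hf Hnear Hfar.
  destruct (Rle_lt_dec a r) as [Har | Hra].
  - eapply Rle_trans; [apply abs_RInt_le_const; [lra | apply Hf; lra |] |].
    { intros t Ht. apply Hfar. lra. }
    nra.
  - rewrite <- (RInt_Chasles_R f r a d) by (apply Hf; lra).
    eapply Rle_trans; [apply Rabs_triang |].
    apply Rplus_le_compat.
    + eapply Rle_trans; [apply abs_RInt_le_const; [lra | apply Hf; lra |] |].
      { intros t Ht. apply Hnear. lra. }
      nra.
    + eapply Rle_trans; [apply abs_RInt_le_const; [lra | apply Hf; lra |] |].
      { intros t Ht. apply Hfar. lra. }
      nra.
Qed.

Lemma one_sub_pow_le (x : R) (k : nat) : 0 <= x <= 1 -> 1 - x ^ k <= INR k * (1 - x).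
Proof.
  intros Hx. induction k as [| k IH]; [simpl; lra |].
  rewrite S_INR. change (x ^ S k) with (x * x ^ k).
  assert (x ^ k <= 1) by (rewrite <- (pow1 k); apply pow_incr; lra).
  assert (0 <= x ^ k) by (apply pow_le; lra).
  nra.
Qed.

Lemma ratio_pow_unit_interval (t s : R) (k : nat) :
  0 < s -> 0 <= t <= s -> 0 <= t / s <= 1 /\ 0 <= (t / s) ^ k <= 1.
Proof.
  intros Hs Ht.
  assert (Hts : 0 <= t / s <= 1).
  { unfold Rdiv. pose proof (Rinv_0_lt_compat s Hs).
    assert (s * / s = 1) by (field; lra). split; nra. }
  split; [exact Hts |].
  split; [apply pow_le; lra | rewrite <- (pow1 k); apply pow_incr; lra].
Qed.

Lemma exp_neg_le_inv (x : R) : 0 < x -> exp (- x) <= / x.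
Proof.
  intros Hx. rewrite exp_Ropp. apply Rinv_le_contravar; [exact Hx |].
  pose proof (exp_ineq1_le x). lra.
Qed.

Section LipschitzExtension.

Variables (V : R -> R) (L a b : R).
Hypotheses (Hab : a < b) (HL : 0 <= L)
  (HV : forall x y, a <= x < b -> a <= y < b -> Rabs (V x - V y) <= L * Rabs (x - y)).

Lemma lipschitz_right_limit :
  exists l, forall x, a <= x < b -> Rabs (V x - l) <= L * (b - x).
Proof.
  (* l + L b is the supremum of V y + L y over [a, b). *)
  set (E := fun z => exists y, a <= y < b /\ z = V y + L * y).
  assert (HE : forall x y, a <= x < b -> a <= y < b ->
                 V y + L * y <= V x + L * x + 2 * L * (b - x)).
  { intros x y Hx Hy. specialize (HV y x Hy Hx).
    assert (0 <= L * (b - x)) by (apply Rmult_le_pos; lra).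
    assert (0 <= L * (b - y)) by (apply Rmult_le_pos; lra).
    pose proof (Rle_abs (V y - V x)).
    destruct (Rle_dec x y);
      [rewrite (Rabs_right (y - x)) in HV by lra | rewrite (Rabs_left (y - x)) in HV by lra];
      lra. }
  destruct (completeness E) as [s [Hub Hlub]].
  - exists (V a + L * a + 2 * L * (b - a)). intros z [y [Hy ->]]. apply HE; lra.
  - exists (V a + L * a). exists a. split; [lra | reflexivity].
  - exists (s - L * b). intros x Hx.
    assert (V x + L * x <= s) by (apply Hub; exists x; split; [exact Hx | reflexivity]).
    assert (s <= V x + L * x + 2 * L * (b - x)).
    { apply Hlub. intros z [y [Hy ->]]. apply HE; assumption. }
    apply Rabs_le. lra.
Qed.

Lemma lipschitz_extension :
  exists W : R -> R,
    (forall x y, Rabs (W x - W y) <= L * Rabs (x - y)) /\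
    (forall x, Rabs (W x) <= Rabs (V a) + L * (b - a)) /\
    (forall x, a <= x < b -> W x = V x).
Proof.
  destruct lipschitz_right_limit as [l Hl].
  set (W := fun x => if Rle_dec b x then l else V (Rmax a x)).
  assert (Hmax : forall x, x < b -> a <= Rmax a x < b).
  { intros x Hx. unfold Rmax. destruct Rle_dec; lra. }
  assert (HWL : forall x y, Rabs (W x - W y) <= L * Rabs (x - y)).
  { intros x y. unfold W.
    destruct (Rle_dec b x), (Rle_dec b y).
    - rewrite Rminus_diag, Rabs_R0. apply Rmult_le_pos; [lra | apply Rabs_pos].
    - rewrite Rabs_minus_sym. eapply Rle_trans; [apply Hl; apply Hmax; lra |].
      apply Rmult_le_compat_l; [lra |].
      unfold Rmax, Rabs. destruct Rle_dec, Rcase_abs; lra.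
    - eapply Rle_trans; [apply Hl; apply Hmax; lra |].
      apply Rmult_le_compat_l; [lra |].
      unfold Rmax, Rabs. destruct Rle_dec, Rcase_abs; lra.
    - eapply Rle_trans; [apply HV; apply Hmax; lra |].
      apply Rmult_le_compat_l; [lra |].
      unfold Rmax, Rabs. repeat destruct Rle_dec; repeat destruct Rcase_abs; lra. }
  assert (HWV : forall x, a <= x < b -> W x = V x).
  { intros x Hx. unfold W. destruct Rle_dec; [lra |].
    rewrite Rmax_right by lra. reflexivity. }
  exists W. split; [exact HWL | split; [| exact HWV]].
  intros x.
  assert (Rabs (W x - V a) <= L * (b - a)).
  { unfold W. destruct (Rle_dec b x).
    - rewrite Rabs_minus_sym. apply Hl. lra.
    - eapply Rle_trans; [apply HV; [apply Hmax; lra | lra] |].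
      apply Rmult_le_compat_l; [lra |].
      unfold Rmax, Rabs. destruct Rle_dec, Rcase_abs; lra. }
  replace (W x) with ((W x - V a) + V a) by ring.
  eapply Rle_trans; [apply Rabs_triang | lra].
Qed.

End LipschitzExtension.

Section ExpKernel.

Variable eps : R.
Hypothesis Heps : 0 < eps.

Lemma RInt_exp_kernel (s : R) :
  RInt (fun t => exp ((t - s) / eps)) 0 s = eps * (1 - exp (- s / eps)).
Proof.
  apply is_RInt_unique.
  replace (eps * (1 - exp (- s / eps)))
    with (eps * exp ((s - s) / eps) - eps * exp ((0 - s) / eps))
    by (replace ((s - s) / eps) with 0 by (field; lra); rewrite exp_0;
        replace ((0 - s) / eps) with (- s / eps) by (field; lra); ring).
  apply (is_RInt_derive (fun t => eps * exp ((t - s) / eps))).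
  - intros t _. auto_derive; [exact I | unfold Rminus, Rdiv; field; lra].
  - intros t _. apply ex_derive_continuous_R. auto_derive. exact I.
Qed.

Lemma RInt_exp_kernel_moment_le (s : R) :
  0 <= s -> RInt (fun t => (s - t) * exp ((t - s) / eps)) 0 s <= eps ^ 2.
Proof.
  intros Hs.
  assert (HI : RInt (fun t => (s - t) * exp ((t - s) / eps)) 0 s
               = eps ^ 2 - (eps * s + eps ^ 2) * exp (- s / eps)).
  { apply is_RInt_unique.
    replace (eps ^ 2 - (eps * s + eps ^ 2) * exp (- s / eps))
      with ((eps * (s - s) + eps ^ 2) * exp ((s - s) / eps)
            - (eps * (s - 0) + eps ^ 2) * exp ((0 - s) / eps))
      by (replace ((s - s) / eps) with 0 by (field; lra); rewrite exp_0;
          replace ((0 - s) / eps) with (- s / eps) by (field; lra); ring).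
    apply (is_RInt_derive (fun t => (eps * (s - t) + eps ^ 2) * exp ((t - s) / eps))).
    - intros t _. auto_derive; [exact I | unfold Rminus, Rdiv; field; lra].
    - intros t _. apply ex_derive_continuous_R. auto_derive. exact I. }
  rewrite HI. pose proof (exp_pos (- s / eps)).
  assert (0 <= (eps * s + eps ^ 2) * exp (- s / eps)) by (apply Rmult_le_pos; nra).
  lra.
Qed.

End ExpKernel.

(* The function w of the sketch above: u_eps n V eps r unfolds to RInt (slope (n - 1) V eps) r 1. *)
Definition slope (m : nat) (V : R -> R) (eps s : R) : R :=
  / eps * RInt (fun t => (t / s) ^ m * exp ((t - s) / eps) * V t) 0 s.

Lemma slope_ext (m : nat) (V W : R -> R) (eps s : R) :
  (forall t, Rmin 0 s < t < Rmax 0 s -> V t = W t) -> slope m V eps s = slope m W eps s.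
Proof.
  intros HVW. unfold slope. f_equal. apply RInt_ext_R. intros t Ht. rewrite HVW by exact Ht.
  reflexivity.
Qed.

Section SlopeEstimates.

Variables (m : nat) (W : R -> R) (L M : R).
Hypotheses (HWL : forall x y, Rabs (W x - W y) <= L * Rabs (x - y))
  (HWM : forall x, Rabs (W x) <= M).

Let L_nonneg : 0 <= L.
Proof.
  pose proof (HWL 1 0) as H. rewrite Rminus_0_r, Rabs_R1, Rmult_1_r in H.
  pose proof (Rabs_pos (W 1 - W 0)). lra.
Qed.

Let M_nonneg : 0 <= M.
Proof. pose proof (HWM 0). pose proof (Rabs_pos (W 0)). lra. Qed.

Let rate_nonneg (k s : R) : 0 <= k -> 0 < s -> 0 <= L + M * k / s.
Proof.
  intros Hk Hs. pose proof (Rinv_0_lt_compat s Hs). unfold Rdiv.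
  apply Rplus_le_le_0_compat; [exact L_nonneg |].
  apply Rmult_le_pos; [apply Rmult_le_pos |]; lra.
Qed.

Let W_continuous (x : R) : continuous W x.
Proof. apply (continuous_of_lipschitz_at W x L). intros y. apply HWL. Qed.

Let ex_RInt_W (a b : R) : ex_RInt W a b.
Proof. apply ex_RInt_continuous_R. intros t _. apply W_continuous. Qed.

Let ex_RInt_smooth_mul_W (g : R -> R) (a b : R) :
  (forall t, ex_derive g t) -> ex_RInt (fun t => g t * W t) a b.
Proof.
  intros Hg. apply ex_RInt_continuous_R. intros t _.
  apply continuous_mult_R; [apply ex_derive_continuous_R, Hg | apply W_continuous].
Qed.

Lemma slope_factor (eps s : R) :
  slope m W eps s = / eps * (/ s) ^ m * exp (- s / eps)
                    * RInt (fun t => t ^ m * exp (t / eps) * W t) 0 s.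
Proof.
  unfold slope. rewrite !Rmult_assoc. f_equal.
  rewrite <- Rmult_assoc, <- RInt_scal_R.
  - apply RInt_ext_R. intros t _. unfold Rdiv. rewrite Rpow_mult_distr.
    replace ((t - s) * / eps) with (t * / eps + - s * / eps) by ring.
    rewrite exp_plus. ring.
  - apply ex_RInt_smooth_mul_W. intros t. auto_derive. exact I.
Qed.

Lemma slope_continuous (eps s : R) : s <> 0 -> continuous (slope m W eps) s.
Proof.
  intros Hs.
  apply (continuous_ext (fun s => / eps * (/ s) ^ m * exp (- s / eps)
                                  * RInt (fun t => t ^ m * exp (t / eps) * W t) 0 s)).
  { intros x. symmetry. apply slope_factor. }
  apply continuous_mult_R.
  - apply ex_derive_continuous_R. auto_derive. exact Hs.
  - apply (continuous_RInt_1 (fun t => t ^ m * exp (t / eps) * W t) 0).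
    apply filter_forall. intros x. apply (RInt_correct (V := R_CompleteNormedModule)).
    apply ex_RInt_smooth_mul_W. intros t. auto_derive. exact I.
Qed.

Lemma slope_zero (eps : R) : slope m W eps 0 = 0.
Proof. unfold slope. rewrite RInt_point. apply Rmult_0_r. Qed.

Lemma slope_abs_le (eps s : R) :
  0 < eps -> 0 <= s -> Rabs (slope m W eps s) <= M * (1 - exp (- s / eps)).
Proof.
  intros Heps Hs. unfold slope.
  rewrite Rabs_mult, Rabs_inv, (Rabs_pos_eq eps) by lra.
  assert (HI : Rabs (RInt (fun t => (t / s) ^ m * exp ((t - s) / eps) * W t) 0 s)
               <= RInt (fun t => M * exp ((t - s) / eps)) 0 s).
  { apply abs_RInt_le_RInt; [lra | | |].
    - apply ex_RInt_smooth_mul_W. intros t. auto_derive. exact I.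
    - apply ex_RInt_ex_derive. intros t. auto_derive. exact I.
    - intros t Ht. destruct (ratio_pow_unit_interval t s m ltac:(lra) ltac:(lra)) as [_ Hp].
      pose proof (exp_pos ((t - s) / eps)). pose proof (HWM t). pose proof (Rabs_pos (W t)).
      rewrite !Rabs_mult, (Rabs_pos_eq ((t / s) ^ m)), (Rabs_pos_eq (exp _)) by lra.
      assert (0 <= exp ((t - s) / eps) * Rabs (W t)) by (apply Rmult_le_pos; lra).
      nra. }
  rewrite RInt_scal_R, RInt_exp_kernel in HI
    by (exact Heps || (apply ex_RInt_ex_derive; intros t; auto_derive; exact I)).
  apply Rmult_le_compat_l with (r := / eps) in HI; [| left; apply Rinv_0_lt_compat; lra].
  replace (/ eps * (M * (eps * (1 - exp (- s / eps))))) with (M * (1 - exp (- s / eps)))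
    in HI by (field; lra).
  exact HI.
Qed.

(* ex_RInt_continuous needs two-sided continuity at the endpoint 0, where slope itself is
   not controlled from the left; its even extension is. *)
Lemma slope_abs_continuous (eps : R) :
  0 < eps -> forall s, continuous (fun x => slope m W eps (Rabs x)) s.
Proof.
  intros Heps s. destruct (Req_dec s 0) as [-> | Hs].
  - apply (continuous_of_lipschitz_at _ 0 (M / eps)). intros x.
    rewrite Rabs_R0, slope_zero, !Rminus_0_r.
    eapply Rle_trans; [apply slope_abs_le; [exact Heps | apply Rabs_pos] |].
    pose proof (exp_ineq1_le (- Rabs x / eps)).
    replace (M / eps * Rabs x) with (M * (Rabs x / eps)) by (field; lra).
    apply Rmult_le_compat_l; [exact M_nonneg |].
    unfold Rdiv in *. lra.
  - apply (continuous_comp Rabs (slope m W eps)).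
    + exact (@continuous_abs R_AbsRing s).
    + apply slope_continuous. apply Rabs_no_R0. exact Hs.
Qed.

Lemma ex_RInt_slope (eps a b : R) :
  0 < eps -> 0 <= a -> 0 <= b -> ex_RInt (slope m W eps) a b.
Proof.
  intros Heps Ha Hb.
  apply (ex_RInt_ext (fun x => slope m W eps (Rabs x))).
  - intros x Hx. rewrite Rabs_pos_eq; [reflexivity |].
    pose proof (Rmin_glb a b 0 Ha Hb). lra.
  - apply ex_RInt_continuous_R. intros z _. apply slope_abs_continuous. exact Heps.
Qed.

Lemma slope_sub_eq (eps s : R) :
  0 < eps ->
  slope m W eps s - W s
  = / eps * RInt (fun t => (t / s) ^ m * exp ((t - s) / eps) * W t
                           - W s * exp ((t - s) / eps)) 0 s
    - W s * exp (- s / eps).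
Proof.
  intros Heps. unfold slope.
  set (e := fun t => exp ((t - s) / eps)).
  assert (He : ex_RInt e 0 s).
  { apply ex_RInt_ex_derive. intros t. unfold e. auto_derive. exact I. }
  rewrite (RInt_minus_R (fun t => (t / s) ^ m * e t * W t) (fun t => W s * e t)).
  - rewrite (RInt_scal_R e) by exact He.
    unfold e. rewrite RInt_exp_kernel by exact Heps. field. lra.
  - apply ex_RInt_smooth_mul_W. intros t. unfold e. auto_derive. exact I.
  - exact (ex_RInt_scal e 0 s (W s) He).
Qed.

Lemma slope_integrand_sub_le (s t : R) :
  0 < t < s -> Rabs ((t / s) ^ m * W t - W s) <= (L + M * INR m / s) * (s - t).
Proof.
  intros Ht.
  destruct (ratio_pow_unit_interval t s m ltac:(lra) ltac:(lra)) as [Hx Hp].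
  pose proof (one_sub_pow_le (t / s) m Hx) as Hdefect.
  replace ((t / s) ^ m * W t - W s) with (- (1 - (t / s) ^ m) * W t + (W t - W s)) by ring.
  eapply Rle_trans; [apply Rabs_triang |].
  assert (Rabs (- (1 - (t / s) ^ m) * W t) <= M * INR m / s * (s - t)).
  { rewrite Rabs_mult, Rabs_Ropp, Rabs_pos_eq by lra.
    apply Rle_trans with ((1 - (t / s) ^ m) * M).
    - apply Rmult_le_compat_l; [lra | apply HWM].
    - replace (M * INR m / s * (s - t)) with (INR m * (1 - t / s) * M) by (field; lra).
      apply Rmult_le_compat_r; lra. }
  assert (Rabs (W t - W s) <= L * (s - t)).
  { eapply Rle_trans; [apply HWL |]. rewrite Rabs_minus_sym, Rabs_pos_eq by lra. lra. }
  lra.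
Qed.

Lemma slope_sub_le (eps s : R) :
  0 < eps -> 0 < s -> Rabs (slope m W eps s - W s) <= eps * (L + M * (INR m + 1) / s).
Proof.
  intros Heps Hs.
  set (C := L + M * INR m / s).
  assert (HC : 0 <= C) by (apply rate_nonneg; [apply pos_INR | exact Hs]).
  assert (HI : Rabs (RInt (fun t => (t / s) ^ m * exp ((t - s) / eps) * W t
                                    - W s * exp ((t - s) / eps)) 0 s) <= C * eps ^ 2).
  { eapply Rle_trans.
    - apply (abs_RInt_le_RInt _ (fun t => C * ((s - t) * exp ((t - s) / eps)))); [lra | | |].
      + assert (Hk : ex_RInt (fun t => (t / s) ^ m * exp ((t - s) / eps) * W t) 0 s).
        { apply ex_RInt_smooth_mul_W. intros t. auto_derive. exact I. }
        assert (He : ex_RInt (fun t => W s * exp ((t - s) / eps)) 0 s).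
        { apply ex_RInt_ex_derive. intros t. auto_derive. exact I. }
        exact (ex_RInt_minus _ _ 0 s Hk He).
      + apply ex_RInt_ex_derive. intros t. auto_derive. exact I.
      + intros t Ht. pose proof (exp_pos ((t - s) / eps)).
        replace ((t / s) ^ m * exp ((t - s) / eps) * W t - W s * exp ((t - s) / eps))
          with (exp ((t - s) / eps) * ((t / s) ^ m * W t - W s)) by ring.
        rewrite Rabs_mult, (Rabs_pos_eq (exp _)) by lra.
        replace (C * ((s - t) * exp ((t - s) / eps)))
          with (exp ((t - s) / eps) * (C * (s - t))) by ring.
        apply Rmult_le_compat_l; [lra | apply slope_integrand_sub_le; exact Ht].
    - rewrite RInt_scal_R by (apply ex_RInt_ex_derive; intros t; auto_derive; exact I).
      apply Rmult_le_compat_l; [exact HC |]. apply RInt_exp_kernel_moment_le; lra. }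
  assert (Hexp : exp (- s / eps) <= eps / s).
  { replace (- s / eps) with (- (s / eps)) by (field; lra).
    replace (eps / s) with (/ (s / eps)) by (field; lra).
    apply exp_neg_le_inv. apply Rdiv_lt_0_compat; lra. }
  rewrite slope_sub_eq by exact Heps.
  eapply Rle_trans; [apply Rabs_triang |].
  rewrite Rabs_Ropp, !Rabs_mult, Rabs_inv, (Rabs_pos_eq eps), (Rabs_pos_eq (exp _))
    by (lra || (left; apply exp_pos)).
  pose proof (HWM s). pose proof (Rabs_pos (W s)). pose proof (exp_pos (- s / eps)).
  assert (Rabs (W s) * exp (- s / eps) <= M * (eps / s)) by (apply Rmult_le_compat; lra).
  apply Rmult_le_compat_l with (r := / eps) in HI; [| left; apply Rinv_0_lt_compat; lra].
  replace (/ eps * (C * eps ^ 2)) with (eps * C) in HI by (field; lra).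
  replace (eps * (L + M * (INR m + 1) / s)) with (eps * C + M * (eps / s))
    by (unfold C; field; lra).
  lra.
Qed.

Lemma RInt_slope_sub_le (eps a r : R) :
  0 < eps -> 0 < a <= 1 -> 0 <= r <= 1 ->
  Rabs (RInt (slope m W eps) r 1 - RInt W r 1)
  <= 2 * M * a + eps * (L + M * (INR m + 1) / a).
Proof.
  intros Heps Ha Hr.
  set (B := eps * (L + M * (INR m + 1) / a)).
  assert (HB : 0 <= B).
  { apply Rmult_le_pos; [lra |]. apply rate_nonneg; [pose proof (pos_INR m) |]; lra. }
  rewrite <- (RInt_minus_R (slope m W eps) W r 1).
  2: { apply ex_RInt_slope; lra. }
  2: { apply ex_RInt_W. }
  eapply Rle_trans.
  - apply (abs_RInt_split_le _ (2 * M) B 0 a 1 r); [lra | lra | lra | exact HB | | |].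
    + intros x y Hx Hy.
      exact (ex_RInt_minus _ _ x y (ex_RInt_slope eps x y Heps ltac:(lra) ltac:(lra))
                                    (ex_RInt_W x y)).
    + intros t Ht. pose proof (slope_abs_le eps t Heps ltac:(lra)).
      pose proof (exp_pos (- t / eps)). pose proof (HWM t).
      pose proof (Rabs_triang (slope m W eps t) (- W t)). rewrite Rabs_Ropp in *.
      assert (M * (1 - exp (- t / eps)) <= M) by nra.
      unfold Rminus. lra.
    + intros t Ht. eapply Rle_trans; [apply slope_sub_le; lra |].
      apply Rmult_le_compat_l; [lra |]. apply Rplus_le_compat_l.
      unfold Rdiv. apply Rmult_le_compat_l.
      * pose proof (pos_INR m). apply Rmult_le_pos; lra.
      * apply Rinv_le_contravar; lra.
  - nra.
Qed.

Lemma RInt_slope_uniform_cvg (eta : R) :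
  0 < eta ->
  exists delta, 0 < delta /\
    forall eps, 0 < eps < delta -> forall r, 0 <= r <= 1 ->
      Rabs (RInt (slope m W eps) r 1 - RInt W r 1) < eta.
Proof.
  intros Heta.
  set (a := Rmin 1 (eta / (4 * (M + 1)))).
  assert (Ha : 0 < a <= 1).
  { unfold a, Rmin. destruct Rle_dec; [lra |]. split; [apply Rdiv_lt_0_compat |]; lra. }
  assert (HMa : 2 * M * a < eta / 2).
  { apply Rle_lt_trans with (2 * M * (eta / (4 * (M + 1)))).
    - apply Rmult_le_compat_l; [lra | apply Rmin_r].
    - apply (Rmult_lt_reg_r (4 * (M + 1))); [lra |].
      replace (2 * M * (eta / (4 * (M + 1))) * (4 * (M + 1))) with (2 * M * eta)
        by (field; lra).
      nra. }
  set (C := L + M * (INR m + 1) / a).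
  assert (HC : 0 <= C) by (apply rate_nonneg; [pose proof (pos_INR m) |]; lra).
  exists (eta / (2 * (C + 1))). split; [apply Rdiv_lt_0_compat; lra |].
  intros eps [Heps Hdelta] r Hr.
  eapply Rle_lt_trans; [apply (RInt_slope_sub_le eps a r); assumption |]. fold C.
  assert (eps * (C + 1) < eta / 2).
  { replace (eta / 2) with (eta / (2 * (C + 1)) * (C + 1)) by (field; lra).
    apply Rmult_lt_compat_r; lra. }
  nra.
Qed.

End SlopeEstimates.

Theorem theorem3p1 (n : nat) (V : R -> R) :
  (1 <= n)%nat ->
  (forall x, 0 <= x < 1 -> 0 <= V x) ->
  (exists L : R, forall x y, 0 <= x < 1 -> 0 <= y < 1 ->
      Rabs (V x - V y) <= L * Rabs (x - y)) ->
  forall eta : R, 0 < eta ->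
  exists delta : R, 0 < delta /\
    forall eps : R, 0 < eps < delta ->
    forall r : R, 0 <= r <= 1 ->
      Rabs (u_eps n V eps r - u_lim V r) < eta.
Proof.
  intros _ _ [L HL] eta Heta.
  assert (HV : forall x y, 0 <= x < 1 -> 0 <= y < 1 ->
                 Rabs (V x - V y) <= Rabs L * Rabs (x - y)).
  { intros x y Hx Hy. eapply Rle_trans; [apply HL; assumption |].
    apply Rmult_le_compat_r; [apply Rabs_pos | apply Rle_abs]. }
  destruct (lipschitz_extension V (Rabs L) 0 1 Rlt_0_1 (Rabs_pos L) HV)
    as [W [HWL [HWM HWV]]].
  destruct (RInt_slope_uniform_cvg (n - 1) W _ _ HWL HWM eta Heta) as [delta [Hdelta Hcvg]].
  exists delta. split; [exact Hdelta |]. intros eps Heps r Hr.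
  replace (u_eps n V eps r) with (RInt (slope (n - 1) W eps) r 1).
  replace (u_lim V r) with (RInt W r 1).
  - apply Hcvg; assumption.
  - apply RInt_ext_R. intros s Hs. rewrite Rmin_left, Rmax_right in Hs by lra.
    apply HWV. lra.
  - apply RInt_ext_R. intros s Hs. rewrite Rmin_left, Rmax_right in Hs by lra.
    apply slope_ext. intros t Ht. rewrite Rmin_left, Rmax_right in Ht by lra.
    apply HWV. lra.
Qed.
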